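(* Let $A=(0,0)$, $B=(1,0)$, $C=(1,1)$, $D=(0,1)$ be the vertices of the unit square in $\mathbb{R}^2$. There is no point $P$ lying on a midline of this square, that is, no point of the form $P=(1/2,\,y)$ with $0\le y\le 1$ or $P=(x,\,1/2)$ with $0\le x\le 1$, such that the four Euclidean distances $|PA|$, $|PB|$, $|PC|$, $|PD|$ are all rational numbers.
   Context: The midlines of the square are the segments joining midpoints of opposite sides. Distances are ordinary Euclidean distances. *)

From Stdlib Require Import Reals QArith Qreals.
Open Scope R_scope.

Definition is_rational (r : R) : Prop := exists q : Q, Q2R q = r.

Definition dist2 (p q : R * R) : R :=
  sqrt ((fst p - fst q) ^ 2 + (snd p - snd q) ^ 2).

Definition on_midline (P : R * R) : Prop :=
  (fst P = 1/2 /\ 0 <= snd P <= 1) \/ (snd P = 1/2 /\ 0 <= fst P <= 1).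

From Stdlib Require Import Reals QArith Qreals.
From Stdlib Require Import ZArith Znumtheory Lia Lra.
Open Scope R_scope.

(* No point of a midline of the unit square has rational distances to all four
   vertices; in fact already two adjacent vertices are too many.  On the midline
   x = 1/2, with P = (1/2, s), the squared distances to A and D are
   r1^2 = 1/4 + s^2 and r2^2 = 1/4 + (s-1)^2; eliminating s gives
        (r1^2 - r2^2)^4 + 4 = 16 r1^2 r2^2,
   and the other midline reduces to the same pair of equations by symmetry.
   Clearing the denominators of rational r1, r2 yields an integer solution of
   X^4 + 4 Y^4 = Z^2 with Y <> 0.  If X = 0 then r1^2 = 1/2, contradicting the
   irrationality of sqrt 2; otherwise Fermat's infinite descent shows that
   X^4 + 4 Y^4 = Z^2 has no solution with X, Y > 0.
   The file develops, in order: coprimality and square-factor lemmas on Z, the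
   parametrisation of Pythagorean triples with an odd leg, the descent for
   X^4 + 4 Y^4 = Z^2, the irrationality of sqrt 2, the clearing of denominators,
   and finally the geometric statement. *)

Section Coprimality.
Local Open Scope Z_scope.

Lemma coprime_intro a b : (forall g, (g | a) -> (g | b) -> (g | 1)) -> Z.gcd a b = 1.
Proof.
  intros Hdiv.
  pose proof (Hdiv _ (Z.gcd_divide_l a b) (Z.gcd_divide_r a b)) as H1.
  apply Z.divide_1_r in H1. pose proof (Z.gcd_nonneg a b). lia.
Qed.

Lemma coprime_common_divisor a b g : Z.gcd a b = 1 -> (g | a) -> (g | b) -> (g | 1).
Proof. intros Hab Ha Hb. rewrite <- Hab. apply Z.gcd_greatest; assumption. Qed.

Lemma coprime_sym a b : Z.gcd a b = 1 -> Z.gcd b a = 1.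
Proof. rewrite Z.gcd_comm. tauto. Qed.

Lemma coprime_mul_l a b c : Z.gcd a c = 1 -> Z.gcd b c = 1 -> Z.gcd (a * b) c = 1.
Proof.
  intros Hac Hbc. apply coprime_sym, Zgcd_1_rel_prime.
  apply rel_prime_mult; apply Zgcd_1_rel_prime, coprime_sym; assumption.
Qed.

Lemma coprime_mul_r a b c : Z.gcd a b = 1 -> Z.gcd a c = 1 -> Z.gcd a (b * c) = 1.
Proof. intros; apply coprime_sym, coprime_mul_l; apply coprime_sym; assumption. Qed.

Lemma coprime_cofactors a b d a' b' :
  d = Z.gcd a b -> d <> 0 -> a = a' * d -> b = b' * d -> Z.gcd a' b' = 1.
Proof.
  intros Hd Hd0 Ha Hb. apply coprime_intro. intros g Hga Hgb.
  assert (Hgd : (g * d | d)).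
  { rewrite Hd at 2. apply Z.gcd_greatest.
    - rewrite Ha. apply Z.mul_divide_mono_r; assumption.
    - rewrite Hb. apply Z.mul_divide_mono_r; assumption. }
  rewrite <- (Z.mul_1_l d) in Hgd at 2.
  apply Z.mul_divide_cancel_r in Hgd; assumption.
Qed.

End Coprimality.

Section Squares.
Local Open Scope Z_scope.

Lemma coprime_square_factor a b c :
  0 <= a -> 0 <= b -> Z.gcd a b = 1 -> a * b = c * c -> exists d, 0 <= d /\ a = d * d.
Proof.
  intros Ha Hb Hab Habc.
  destruct (Z.eq_dec a 0) as [->|Ha0]. { exists 0; lia. }
  set (d := Z.gcd a c).
  assert (Hd : 0 < d).
  { pose proof (Z.gcd_nonneg a c).
    assert (d <> 0) by (intro E; apply Ha0; eapply Z.gcd_eq_0_l; eauto). lia. }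
  destruct (Z.gcd_divide_l a c) as [a' Ha'].
  destruct (Z.gcd_divide_r a c) as [c' Hc'].
  fold d in Ha', Hc'.
  assert (Hac' : Z.gcd a' c' = 1) by (eapply coprime_cofactors; eauto; lia).
  (* From a' d b = d^2 c'^2: a' divides d, and d divides a' since gcd(d, b) = 1. *)
  assert (E : a' * b = d * (c' * c')).
  { apply (Z.mul_reg_r _ _ d); [lia|]. rewrite Ha', Hc' in Habc. nia. }
  assert (Ha'd : (a' | d)).
  { apply (Z.gauss _ (c' * c')); [exists b; lia|]. apply coprime_mul_r; assumption. }
  assert (Hdb : Z.gcd d b = 1).
  { apply coprime_intro. intros g Hgd Hgb. apply (coprime_common_divisor a b); auto.
    apply (Z.divide_trans _ d); auto. exists a'; exact Ha'. }
  assert (Hda' : (d | a')).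
  { apply (Z.gauss _ b); [exists (c' * c'); lia | assumption]. }
  assert (a' = d) by (apply Z.divide_antisym_nonneg; auto; nia).
  exists d. subst a'. split; lia.
Qed.

Lemma coprime_product_square a b c :
  0 <= a -> 0 <= b -> 0 <= c -> Z.gcd a b = 1 -> a * b = c * c ->
  exists d e, 0 <= d /\ 0 <= e /\ a = d * d /\ b = e * e /\ c = d * e.
Proof.
  intros Ha Hb Hc Hab Habc.
  destruct (coprime_square_factor a b c Ha Hb Hab Habc) as [d [Hd Hda]].
  destruct (coprime_square_factor b a c Hb Ha (coprime_sym _ _ Hab) ltac:(lia))
    as [e [He Heb]].
  exists d, e. repeat split; auto. subst a b. nia.
Qed.

Lemma square_divides a b : 0 < a -> (a * a | b * b) -> (a | b).
Proof.
  intros Ha Hab.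
  set (d := Z.gcd a b).
  assert (Hd : 0 < d).
  { pose proof (Z.gcd_nonneg a b).
    assert (d <> 0) by (intro E; apply Z.gcd_eq_0_l in E; lia). lia. }
  destruct (Z.gcd_divide_l a b) as [a' Ha'].
  destruct (Z.gcd_divide_r a b) as [b' Hb'].
  fold d in Ha', Hb'.
  assert (Hab' : Z.gcd a' b' = 1) by (eapply coprime_cofactors; eauto; lia).
  assert (Hsq : (a' * a' | b' * b')).
  { apply (Z.mul_divide_cancel_r _ _ (d * d)); [nia|].
    replace (a' * a' * (d * d)) with (a * a) by (rewrite Ha'; ring).
    replace (b' * b' * (d * d)) with (b * b) by (rewrite Hb'; ring). exact Hab. }
  assert (Hunit : (a' | 1)).
  { apply (coprime_common_divisor (a' * a') (b' * b')).
    - apply coprime_mul_l; apply coprime_mul_r; assumption.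
    - apply Z.divide_mul_l, Z.divide_refl.
    - apply (Z.divide_trans _ (a' * a')); [apply Z.divide_mul_l, Z.divide_refl | exact Hsq]. }
  apply Z.divide_1_r in Hunit.
  assert (a' = 1) by nia. subst a'.
  rewrite Ha', Z.mul_1_l. apply Z.gcd_divide_r.
Qed.

Lemma even_square z : Z.Even (z * z) -> Z.Even z.
Proof.
  intros [k Hk]. destruct (Z.Even_or_Odd z) as [H|[m Hm]]; [exact H|]. subst. lia.
Qed.

(* A sum of two odd squares is 2 mod 4, hence never a square. *)
Lemma odd_squares_sum u v w : Z.Odd u -> Z.Odd v -> u * u + v * v <> w * w.
Proof.
  intros [i ->] [j ->] E.
  destruct (Z.Even_or_Odd w) as [[k ->]|[k ->]]; lia.
Qed.

End Squares.

Section Descent.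
Local Open Scope Z_scope.

Lemma pythagorean_odd_leg u t w :
  0 < u -> 0 <= t -> 0 <= w -> Z.Odd u -> Z.gcd u t = 1 ->
  u * u + (2 * t) * (2 * t) = w * w ->
  exists a b, 0 <= a /\ 0 <= b /\ Z.gcd a b = 1 /\
    u = a * a - b * b /\ t = a * b /\ w = a * a + b * b.
Proof.
  intros Hu Ht Hw [j Hj] Hut E.
  assert (Hwo : Z.Odd w).
  { destruct (Z.Even_or_Odd w) as [[k Hk]|Ho]; [subst; lia | exact Ho]. }
  destruct Hwo as [k Hk].
  (* R = (w + u)/2 and S = (w - u)/2 are coprime with R S = t^2. *)
  set (R := k + j + 1). set (S := k - j).
  assert (HRS : R * S = t * t) by (unfold R, S; subst; lia).
  assert (HS : 0 <= S) by (unfold S; nia).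
  assert (HR : 0 <= R) by (unfold R; lia).
  assert (Hcop : Z.gcd R S = 1).
  { apply coprime_intro. intros g HgR HgS. apply (coprime_common_divisor u (t * t)).
    - apply coprime_mul_r; assumption.
    - replace u with (R - S) by (unfold R, S; lia). apply Z.divide_sub_r; assumption.
    - rewrite <- HRS. apply Z.divide_mul_l; assumption. }
  destruct (coprime_product_square R S t HR HS Ht Hcop HRS)
    as [a [b [Ha [Hb [HRa [HSb Htab]]]]]].
  exists a, b. repeat split; auto.
  - apply coprime_intro. intros g Hga Hgb. apply (coprime_common_divisor R S g Hcop).
    + rewrite HRa. apply Z.divide_mul_l; assumption.
    + rewrite HSb. apply Z.divide_mul_l; assumption.
  - rewrite <- HRa, <- HSb. unfold R, S. lia.
  - rewrite <- HRa, <- HSb. unfold R, S. lia.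
Qed.

Lemma coprime_twice_square e f c :
  0 <= e -> 0 <= f -> Z.gcd e f = 1 -> e * f = 2 * (c * c) ->
  exists g h, (e = 2 * (g * g) /\ f = h * h) \/ (e = h * h /\ f = 2 * (g * g)).
Proof.
  assert (Heven : forall e f, 0 <= e -> 0 <= f -> Z.gcd e f = 1 ->
            e * f = 2 * (c * c) -> Z.Even e -> exists g h, e = 2 * (g * g) /\ f = h * h).
  { intros e' f' He Hf Hef E [e'' ->].
    assert (Hcop : Z.gcd e'' f' = 1).
    { apply coprime_intro. intros g Hge Hgf. apply (coprime_common_divisor _ _ _ Hef); auto.
      apply Z.divide_mul_r; assumption. }
    destruct (coprime_square_factor e'' f' c ltac:(lia) Hf Hcop ltac:(lia)) as [g [_ Hg]].
    destruct (coprime_square_factor f' e'' c Hf ltac:(lia) (coprime_sym _ _ Hcop) ltac:(lia))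
      as [h [_ Hh]].
    exists g, h. split; lia. }
  intros He Hf Hef E.
  destruct (Z.Even_or_Odd e) as [Hee|[i Hi]].
  - destruct (Heven e f He Hf Hef E Hee) as [g [h Hgh]]. exists g, h. left; exact Hgh.
  - destruct (Z.Even_or_Odd f) as [Hfe|[j Hj]].
    + destruct (Heven f e Hf He (coprime_sym _ _ Hef) ltac:(lia) Hfe) as [g [h [Hg Hh]]].
      exists g, h. right; split; assumption.
    + subst. lia.
Qed.

Definition quartic_solution (x y z : Z) : Prop :=
  0 < x /\ 0 < y /\ 0 <= z /\ x * x * (x * x) + 4 * (y * y * (y * y)) = z * z.

Lemma quartic_solution_pos x y z : quartic_solution x y z -> 0 < z.
Proof. intros [Hx [Hy [Hz E]]]. destruct (Z.eq_dec z 0); subst; nia. Qed.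

(* A common factor g of x and y can be divided out: g^2 divides z. *)
Lemma descent_common_factor x y z :
  quartic_solution x y z -> Z.gcd x y <> 1 ->
  exists x' y' z', quartic_solution x' y' z' /\ z' < z.
Proof.
  intros Hs Hg1. pose proof (quartic_solution_pos _ _ _ Hs) as Hz.
  destruct Hs as [Hx [Hy [_ E]]].
  set (g := Z.gcd x y).
  assert (Hg : 2 <= g).
  { pose proof (Z.gcd_nonneg x y).
    assert (g <> 0) by (intro H0; apply Z.gcd_eq_0_l in H0; lia). lia. }
  destruct (Z.gcd_divide_l x y) as [x' Hx']. destruct (Z.gcd_divide_r x y) as [y' Hy'].
  fold g in Hx', Hy'.
  assert (Hdiv : (g * g | z)).
  { apply square_divides; [nia|]. exists (x' * x' * (x' * x') + 4 * (y' * y' * (y' * y'))).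
    rewrite <- E, Hx', Hy'. ring. }
  destruct Hdiv as [k Hk].
  assert (Hk0 : 0 < k) by nia.
  assert (Hk4 : x' * x' * (x' * x') + 4 * (y' * y' * (y' * y')) = k * k).
  { apply (Z.mul_reg_l _ _ (g * g * (g * g))); [nia|].
    transitivity (x * x * (x * x) + 4 * (y * y * (y * y))); [rewrite Hx', Hy'; ring|].
    rewrite E, Hk. ring. }
  exists x', y', k. repeat split; [nia | nia | lia | exact Hk4 |].
  assert (4 <= g * g) by nia. nia.
Qed.

(* For even x = 2x', z is even and (y, x', z/2) is a smaller solution. *)
Lemma descent_even x y z :
  quartic_solution x y z -> Z.Even x ->
  exists x' y' z', quartic_solution x' y' z' /\ z' < z.
Proof.
  intros Hs [x' Hx']. pose proof (quartic_solution_pos _ _ _ Hs) as Hz.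
  destruct Hs as [Hx [Hy [_ E]]].
  assert (Hze : Z.Even z).
  { apply even_square. exists (8 * (x' * x' * (x' * x')) + 2 * (y * y * (y * y))).
    rewrite <- E, Hx'. ring. }
  destruct Hze as [z' Hz'].
  exists y, x', z'. repeat split; lia.
Qed.

Lemma hypotenuse_quartic x m n b :
  0 < x -> 0 <= m -> 0 < n -> Z.Odd x -> Z.gcd m n = 1 -> n = b * b ->
  x * x + n * n = m * m ->
  exists g h, 0 < g /\ 0 < h /\ h * h * (h * h) + 4 * (g * g * (g * g)) = m.
Proof.
  intros Hx Hm Hn Hxo Hmn Hnb Hpyth.
  destruct (Z.Even_or_Odd n) as [[t Ht]|Hno];
    [| exfalso; exact (odd_squares_sum x n m Hxo Hno Hpyth)].
  assert (Hxt : Z.gcd x t = 1).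
  { apply coprime_intro. intros g Hgx Hgt.
    assert (Hgn : (g | n)) by (rewrite Ht; apply Z.divide_mul_r; assumption).
    apply (coprime_common_divisor (m * m) n); [apply coprime_mul_l; assumption| |exact Hgn].
    rewrite <- Hpyth. apply Z.divide_add_r; apply Z.divide_mul_l; assumption. }
  destruct (pythagorean_odd_leg x t m Hx ltac:(lia) Hm Hxo Hxt ltac:(lia))
    as [e [f [He [Hf [Hef [_ [Htef Hmef]]]]]]].
  (* n = b^2 is even, so b = 2c and e f = t = 2 c^2. *)
  destruct (even_square b) as [c Hc]; [exists t; lia|].
  destruct (coprime_twice_square e f c He Hf Hef ltac:(subst; lia)) as [g [h Hgh]].
  assert (Hgh0 : g <> 0 /\ h <> 0).
  { assert (e * f <> 0) by lia. destruct Hgh as [[-> ->]|[-> ->]]; split; intros ->; lia. }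
  exists (Z.abs g), (Z.abs h). split; [lia | split; [lia|]].
  rewrite !Z.abs_square, Hmef. destruct Hgh as [[-> ->]|[-> ->]]; ring.
Qed.

(* The heart of the descent, for x odd and coprime to y: (x^2, 2 y^2, z) is a
   primitive Pythagorean triple, whence x^2 = m^2 - n^2, y^2 = m n with m = a^2,
   n = b^2; then a^2 = m = h^4 + 4 g^4 gives the smaller solution (h, g, a). *)
Lemma descent_primitive_odd x y z :
  quartic_solution x y z -> Z.gcd x y = 1 -> Z.Odd x ->
  exists x' y' z', quartic_solution x' y' z' /\ z' < z.
Proof.
  intros [Hx [Hy [Hz E]]] Hxy Hxo.
  assert (Hxxo : Z.Odd (x * x)) by (destruct Hxo as [k ->]; exists (2 * k * k + 2 * k); ring).
  destruct (pythagorean_odd_leg (x * x) (y * y) z ltac:(nia) ltac:(nia) Hz Hxxo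
              ltac:(apply coprime_mul_l; apply coprime_mul_r; assumption) ltac:(lia))
    as [m [n [Hm [Hn [Hmn [Hxmn [Hymn Hzmn]]]]]]].
  assert (Hn0 : 0 < n) by (destruct (Z.eq_dec n 0); subst; nia).
  destruct (coprime_product_square m n y Hm Hn ltac:(lia) Hmn ltac:(lia))
    as [a [b [Ha [_ [Hma [Hnb _]]]]]].
  destruct (hypotenuse_quartic x m n b Hx Hm Hn0 Hxo Hmn Hnb ltac:(lia))
    as [g [h [Hg [Hh Hm4]]]].
  exists h, g, a. repeat split; try lia.
  (* a <= a^2 = m <= m^2 < m^2 + n^2 = z *)
  assert (Hm0 : 0 < m) by (clear - Hy Hymn Hm Hn0; nia).
  assert (a <= m) by (clear - Ha Hma; nia).
  assert (m <= m * m) by (clear - Hm0; nia).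
  assert (0 < n * n) by (clear - Hn0; nia). lia.
Qed.

Lemma descent_step x y z :
  quartic_solution x y z -> exists x' y' z', quartic_solution x' y' z' /\ z' < z.
Proof.
  intros Hs.
  destruct (Z.Even_or_Odd x) as [Hxe|Hxo]; [exact (descent_even x y z Hs Hxe)|].
  destruct (Z.eq_dec (Z.gcd x y) 1) as [Hg|Hg].
  - exact (descent_primitive_odd x y z Hs Hg Hxo).
  - exact (descent_common_factor x y z Hs Hg).
Qed.

Lemma no_quartic_solution x y z : ~ quartic_solution x y z.
Proof.
  intros Hs. assert (Hz : 0 <= z) by apply Hs.
  revert x y Hs. pattern z. apply Z_lt_induction; [|exact Hz].
  intros z0 IH x y Hs.
  destruct (descent_step _ _ _ Hs) as [x' [y' [z' [Hs' Hlt]]]].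
  exact (IH z' (conj (proj1 (proj2 (proj2 Hs'))) Hlt) x' y' Hs').
Qed.

Lemma no_square_root_two d c : 0 <= d -> 2 * (c * c) = d * d -> d = 0.
Proof.
  intros Hd. revert c. generalize Hd. pattern d. apply Z_lt_induction; [|exact Hd].
  intros d0 IH Hd0 c E.
  destruct (even_square d0) as [d' ->]; [exists (c * c); lia|].
  destruct (even_square c) as [c' ->]; [exists (d' * d'); lia|].
  destruct (Z.eq_dec d' 0) as [->|Hd']; [lia|].
  assert (d' = 0) by (apply (IH d' ltac:(lia) ltac:(lia) c'); lia). lia.
Qed.

End Descent.

Lemma midline_relation s r1 r2 :
  r1 * r1 = 1/4 + s * s -> r2 * r2 = 1/4 + (s - 1) * (s - 1) ->
  (r1 * r1 - r2 * r2) ^ 4 + 4 = 16 * (r1 * r1) * (r2 * r2).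
Proof. intros H1 H2. rewrite H1, H2. field. Qed.

(* Multiplying the relation by (D1 D2)^8 turns rationals p = N1/D1, q = N2/D2
   into an integer solution of X^4 + 4 Y^4 = W^2. *)
Lemma cleared_relation p q (N1 D1 N2 D2 : Z) :
  IZR N1 = p * IZR D1 -> IZR N2 = q * IZR D2 ->
  (p * p - q * q) ^ 4 + 4 = 16 * (p * p) * (q * q) ->
  let X := (N1 * N1 * (D2 * D2) - N2 * N2 * (D1 * D1))%Z in
  let Y := (D1 * D1 * (D2 * D2))%Z in
  let W := (4 * N1 * N2 * (D1 * D1 * D1) * (D2 * D2 * D2))%Z in
  (X * X * (X * X) + 4 * (Y * Y * (Y * Y)) = W * W)%Z.
Proof.
  intros HN1 HN2 Hrel X Y W. apply eq_IZR. unfold X, Y, W.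
  repeat rewrite ?plus_IZR, ?minus_IZR, ?mult_IZR. rewrite HN1, HN2.
  transitivity ((IZR D1 * IZR D2) ^ 8 * ((p * p - q * q) ^ 4 + 4)); [ring|].
  rewrite Hrel. ring.
Qed.

Lemma Q2R_num_den (q : Q) : IZR (Qnum q) = Q2R q * IZR (QDen q).
Proof. unfold Q2R. field. apply not_0_IZR. discriminate. Qed.

Lemma no_rational_square_half (q : Q) : Q2R q * Q2R q <> 1/2.
Proof.
  intros Hq.
  assert (E : (2 * (Qnum q * Qnum q) = QDen q * QDen q)%Z).
  { apply eq_IZR. rewrite !mult_IZR, Q2R_num_den.
    transitivity (2 * (Q2R q * Q2R q) * (IZR (QDen q) * IZR (QDen q))); [ring|].
    rewrite Hq. field. }
  apply no_square_root_two in E; [discriminate | lia].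
Qed.

(* The relation has no solution in rationals: if p^2 = q^2 it forces p^2 = 1/2,
   otherwise clearing denominators gives a positive solution of the quartic. *)
Lemma no_rational_relation (p q : Q) :
  (Q2R p * Q2R p - Q2R q * Q2R q) ^ 4 + 4 <> 16 * (Q2R p * Q2R p) * (Q2R q * Q2R q).
Proof.
  intros Hrel.
  destruct (Req_dec (Q2R p * Q2R p) (Q2R q * Q2R q)) as [Heq|Hne].
  - apply (no_rational_square_half p).
    rewrite <- Heq in Hrel. nra.
  - pose proof (cleared_relation _ _ _ _ _ _ (Q2R_num_den p) (Q2R_num_den q) Hrel) as E.
    cbv zeta in E.
    set (X := (Qnum p * Qnum p * (QDen q * QDen q) - Qnum q * Qnum q * (QDen p * QDen p))%Z)
      in E.
    set (Y := (QDen p * QDen p * (QDen q * QDen q))%Z) in E.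
    set (W := (4 * Qnum p * Qnum q * (QDen p * QDen p * QDen p) * (QDen q * QDen q * QDen q))%Z)
      in E.
    assert (HX : X <> 0%Z).
    { intro HX. apply Hne.
      assert (Hd : IZR (QDen p) * IZR (QDen q) <> 0)
        by (apply Rmult_integral_contrapositive; split; apply not_0_IZR; discriminate).
      apply Rminus_diag_uniq, (Rmult_eq_reg_l ((IZR (QDen p) * IZR (QDen q)) ^ 2));
        [| apply pow_nonzero; exact Hd].
      rewrite Rmult_0_r, <- HX. unfold X.
      repeat rewrite ?minus_IZR, ?mult_IZR. rewrite !Q2R_num_den. ring. }
    apply (no_quartic_solution (Z.abs X) Y (Z.abs W)).
    unfold quartic_solution. split; [|split; [|split]].
    + lia.
    + unfold Y. assert (0 < QDen p)%Z by reflexivity. assert (0 < QDen q)%Z by reflexivity. nia.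
    + lia.
    + rewrite !Z.abs_square. exact E.
Qed.

Lemma rational_sqrt_square (E : R) : 0 <= E -> is_rational (sqrt E) ->
  exists q : Q, Q2R q * Q2R q = E.
Proof. intros HE [q Hq]. exists q. rewrite Hq. apply sqrt_sqrt; exact HE. Qed.

Lemma no_rational_midline_pair s :
  is_rational (sqrt (1/4 + s * s)) -> is_rational (sqrt (1/4 + (s - 1) * (s - 1))) -> False.
Proof.
  intros H1 H2.
  pose proof (Rle_0_sqr s) as Hs0. pose proof (Rle_0_sqr (s - 1)) as Hs1. unfold Rsqr in *.
  destruct (rational_sqrt_square (1/4 + s * s) ltac:(lra) H1) as [p Hp].
  destruct (rational_sqrt_square (1/4 + (s - 1) * (s - 1)) ltac:(lra) H2) as [q Hq].
  exact (no_rational_relation p q (midline_relation s _ _ Hp Hq)).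
Qed.

Theorem theorem2 :
  ~ exists P : R * R,
      on_midline P /\
      is_rational (dist2 P (0, 0)) /\
      is_rational (dist2 P (1, 0)) /\
      is_rational (dist2 P (1, 1)) /\
      is_rational (dist2 P (0, 1)).
Proof.
  intros [[px py] [Hmid [HA [HB [_ HD]]]]].
  unfold dist2, on_midline in *; simpl in *.
  destruct Hmid as [[-> _]|[-> _]].
  -
    apply (no_rational_midline_pair py).
    + replace (1/4 + py * py) with ((1/2 - 0) ^ 2 + (py - 0) ^ 2) by field. exact HA.
    + replace (1/4 + (py - 1) * (py - 1)) with ((1/2 - 0) ^ 2 + (py - 1) ^ 2) by field. exact HD.
  -
    apply (no_rational_midline_pair px).
    + replace (1/4 + px * px) with ((px - 0) ^ 2 + (1/2 - 0) ^ 2) by field. exact HA.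
    + replace (1/4 + (px - 1) * (px - 1)) with ((px - 1) ^ 2 + (1/2 - 0) ^ 2) by field. exact HB.
Qed.
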